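(* Let $\Sigma$ be a complete hyperbolic surface without cusps with metric $g$ and area form $dArea$, $\gamma$ a simple closed geodesic, and $R>0$ such that $B_R(\gamma)$ is isometric to $\gamma\times]-R,R[$ with metric $\cosh^2(r)dt^2+dr^2$. Let $(R_m)$, $(\phi_m)$, $(\psi_m)$ be sequences with $R_m<R$, $R_m\downarrow0$, $\phi_m,\psi_m\in C_0^\infty(]-R_m,R_m[)$, $\int_{-R_m}^{R_m}\cosh(s)\psi_m(s)ds=1$, and $(\|\psi_m\|_{L^1})$ uniformly bounded. Let $\tilde\kappa_m:=\left.\frac{\partial}{\partial s}\kappa_{s\phi_m,s\psi_m}\right|_{s=0}$, where $\kappa_{\phi,\psi}$ is the curvature of the metric $g_{\phi,\psi}$ equal to $(\cosh(r)dt-\phi(r)dr)^2+e^{2\psi(r)}dr^2$ on $B_R(\gamma)$ and to $g$ elsewhere. Then for every Lipschitz function $f$ on $\Sigma$, $$\lim_{m\to\infty}\int_\Sigma f\,\tilde\kappa_m\,dArea=\int_\gamma f\,dl.$$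
   Context: $t$ is an arc-length parameter of $\gamma$ and $r$ the signed distance to $\gamma$. *)

From Stdlib Require Import Reals.
From Coquelicot Require Import Coquelicot.
Open Scope R_scope.

Definition du (h : R -> R -> R) (u v : R) : R := Derive (fun x => h x v) u.
Definition dv (h : R -> R -> R) (u v : R) : R := Derive (fun y => h u y) v.

Definition det3 (a b c d e f g h i : R) : R :=
  a * (e * i - f * h) - b * (d * i - f * g) + c * (d * h - e * g).

(* Gaussian curvature of the metric  E du^2 + 2 F du dv + G dv^2
   (Brioschi formula). *)
Definition gauss_curv (E F G : R -> R -> R) (u v : R) : R :=
  (det3 (- dv (dv E) u v / 2 + du (dv F) u v - du (du G) u v / 2)
        (du E u v / 2) (du F u v - dv E u v / 2)
        (dv F u v - du G u v / 2) (E u v) (F u v)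
        (dv G u v / 2) (F u v) (G u v)
   - det3 0 (dv E u v / 2) (du G u v / 2)
          (dv E u v / 2) (E u v) (F u v)
          (du G u v / 2) (F u v) (G u v))
  / (E u v * G u v - F u v ^ 2) ^ 2.

(* Curvature kappa_{phi,psi}(t,r) of g_{phi,psi} = (cosh r dt - phi(r) dr)^2
   + e^{2 psi(r)} dr^2 on the collar, in collar coordinates (t,r). *)
Definition kappa (phi psi : R -> R) (t r : R) : R :=
  gauss_curv (fun _ r => cosh r ^ 2)
             (fun _ r => - (cosh r * phi r))
             (fun _ r => phi r ^ 2 + exp (2 * psi r)) t r.

Definition kappa_tilde (phi psi : R -> R) (t r : R) : R :=
  Derive (fun s => kappa (fun x => s * phi x) (fun x => s * psi x) t r) 0.

Definition smooth (f : R -> R) : Prop :=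
  forall n x, ex_derive (Derive_n f n) x.

(* f in C_0^infinity(]a,b[) (extended by 0 to R): smooth with compact
   support contained in ]a,b[. *)
Definition C0inf (a b : R) (f : R -> R) : Prop :=
  smooth f /\
  exists a' b', a < a' /\ b' < b /\ forall x, (x < a' \/ b' < x) -> f x = 0.

From Stdlib Require Import Reals Lra.
From Coquelicot Require Import Coquelicot.
Open Scope R_scope.

(* On the collar, differentiating the Brioschi formula at [s = 0] gives
   [kappa_tilde_m * cosh r = 2 cosh r psi_m + sinh r psi_m'], since [phi_m] enters only at
   order [s^2].  As [cosh psi + sinh psi' = (sinh psi)'], this density has total mass
   [int cosh psi_m = 1] and support in [-R_m, R_m], so the inner integral minus [f(t,0)] is
   [int (f(t,r) - f(t,0)) (2 cosh r psi_m + sinh r psi_m') dr].  The [psi_m] part is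
   [O(R_m |psi_m|_1)] because [f] is Lipschitz; the [psi_m'] part is moved onto the Lipschitz
   function [(f(t,r) - f(t,0)) sinh r] by an integration by parts (carried out with difference
   quotients, as [f] need not be differentiable), giving the same bound.  The error is thus
   [O(R_m)] uniformly in [t]. *)

Lemma continuous_of_ex_derive (f : R -> R) x : ex_derive f x -> continuous f x.
Proof. apply (ex_derive_continuous (K := R_AbsRing) (V := R_NormedModule)). Qed.

Ltac solve_continuous :=
  unfold Rdiv; solve [repeat match goal with
  | |- continuous (fun y => @?f y * @?g y) _ => apply (continuous_mult f g)
  | |- continuous (fun y => @?f y + @?g y) _ => apply (continuous_plus f g)
  | |- continuous (fun y => @?f y - @?g y) _ => apply (continuous_minus f g)
  | |- continuous (fun y => Rabs (@?f y)) _ => apply (continuous_Rabs_comp f)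
  | |- continuous (fun _ => _) _ => apply continuous_const
  | |- continuous (fun y => y) _ => apply continuous_id
  | |- continuous _ _ => solve [auto]
  | |- continuous _ _ => apply continuous_of_ex_derive; solve [auto_derive; auto]
  | |- continuous (fun y => ?h (@?f y)) _ => apply (continuous_comp f h)
  end].

Ltac solve_ex_RInt :=
  apply (ex_RInt_continuous (V := R_CompleteNormedModule)); intros; solve_continuous.

Lemma continuous_of_lipschitz (g : R -> R) K x :
  (forall y, Rabs (g y - g x) <= K * Rabs (y - x)) -> continuous g x.
Proof.
intros Hg. apply continuity_pt_filterlim. intros eps Heps.
assert (HK := Rabs_pos K).
exists (eps / (Rabs K + 1)). split; [apply Rdiv_lt_0_compat; lra |].
intros y [_ Hy]; simpl in Hy |- *; unfold R_dist in Hy |- *.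
assert (Hxy := Rabs_pos (y - x)).
assert (Heps' : eps = eps / (Rabs K + 1) * (Rabs K + 1)) by (field; lra).
apply Rle_lt_trans with (Rabs K * Rabs (y - x)).
- eapply Rle_trans; [apply Hg |].
  apply Rmult_le_compat_r; [lra | apply Rle_abs].
- nra.
Qed.

Lemma Rle_of_small_linear_error X Y A d0 :
  0 < d0 -> (forall d, 0 < d < d0 -> X <= Y + A * d) -> X <= Y.
Proof.
intros Hd0 HX. apply Rle_plus_epsilon. intros eps Heps.
assert (HA := Rabs_pos A).
set (d := Rmin (d0 / 2) (eps / (Rabs A + 1))).
assert (Hd : 0 < d) by (apply Rmin_pos; [lra | apply Rdiv_lt_0_compat; lra]).
assert (Hd1 : d <= d0 / 2) by apply Rmin_l.
assert (Hd2 : d * (Rabs A + 1) <= eps).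
{ apply Rle_trans with (eps / (Rabs A + 1) * (Rabs A + 1)).
  - apply Rmult_le_compat_r; [lra | apply Rmin_r].
  - right; field; lra. }
assert (HAd : A * d <= Rabs A * d) by (apply Rmult_le_compat_r; [lra | apply Rle_abs]).
specialize (HX d ltac:(lra)). nra.
Qed.

Lemma abs_sub_le_of_abs_derive_le (g : R -> R) x y M :
  (forall z, ex_derive g z) ->
  (forall z, Rmin x y <= z <= Rmax x y -> Rabs (Derive g z) <= M) ->
  Rabs (g y - g x) <= M * Rabs (y - x).
Proof.
intros Hg HM.
destruct (MVT_abs g (Derive g) x y) as [c [-> Hc]].
- intros c _. apply is_derive_Reals, Derive_correct, Hg.
- apply Rmult_le_compat_r; [apply Rabs_pos | apply HM, Hc].
Qed.

Lemma cosh_pos x : 0 < cosh x.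
Proof. unfold cosh. generalize (exp_pos x) (exp_pos (- x)). lra. Qed.

Lemma exp_le_exp_of_le x y : x <= y -> exp x <= exp y.
Proof. intros [Hxy | ->]; [left; apply exp_increasing, Hxy | right; reflexivity]. Qed.

Lemma cosh_le_exp x A : Rabs x <= A -> cosh x <= exp A.
Proof.
intros Hx. apply Rabs_le_between in Hx. unfold cosh.
assert (exp x <= exp A) by (apply exp_le_exp_of_le; lra).
assert (exp (- x) <= exp A) by (apply exp_le_exp_of_le; lra).
lra.
Qed.

Lemma sinh_lipschitz x y A :
  Rabs x <= A -> Rabs y <= A -> Rabs (sinh x - sinh y) <= exp A * Rabs (x - y).
Proof.
intros Hx Hy. apply abs_sub_le_of_abs_derive_le.
- intro z. auto_derive. auto.
- intros z Hz. rewrite (is_derive_unique sinh z (cosh z)).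
  + rewrite Rabs_pos_eq by (left; apply cosh_pos). apply cosh_le_exp.
    apply Rabs_le_between in Hx, Hy. apply Rabs_le. split.
    * apply Rle_trans with (Rmin y x); [apply Rmin_glb; lra | apply Hz].
    * apply Rle_trans with (Rmax y x); [apply Hz | apply Rmax_lub; lra].
  + auto_derive; [auto | unfold cosh, sinh; field].
Qed.

Lemma bounded_on_of_continuous (g : R -> R) a b :
  a <= b -> (forall x, continuous g x) ->
  exists M, forall x, a <= x <= b -> Rabs (g x) <= M.
Proof.
intros Hab Hg.
destruct (continuity_ab_maj (fun x => Rabs (g x)) a b Hab) as [x0 [Hx0 _]].
{ intros c _. apply continuity_pt_filterlim, (continuous_Rabs_comp g), Hg. }
exists (Rabs (g x0)). exact Hx0.
Qed.

Lemma RInt_scal_minus (u v : R -> R) a b c :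
  (forall x, continuous u x) -> (forall x, continuous v x) ->
  RInt (fun x => c * (u x - v x)) a b = c * (RInt u a b - RInt v a b).
Proof.
intros Hu Hv.
rewrite (RInt_scal (fun x => u x - v x)) by solve_ex_RInt.
rewrite (RInt_minus u v) by solve_ex_RInt.
reflexivity.
Qed.

Lemma RInt_eq_of_zero_outside (g : R -> R) a b c d :
  c <= a -> a <= b -> b <= d -> (forall x, continuous g x) ->
  (forall x, c < x < a \/ b < x < d -> g x = 0) ->
  RInt g c d = RInt g a b.
Proof.
intros Hca Hab Hbd Hg Hzero.
assert (Hnull : forall u v, u <= v -> (forall x, u < x < v -> g x = 0) -> RInt g u v = 0).
{ intros u v Huv Huv0. rewrite (RInt_ext g (fun _ => 0)).
  - rewrite RInt_const. apply (scal_zero_r (V := R_ModuleSpace)).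
  - intros x Hx. rewrite Rmin_left, Rmax_right in Hx by lra. auto. }
rewrite <- (RInt_Chasles g c a d), <- (RInt_Chasles g a b d) by solve_ex_RInt.
rewrite (Hnull c a), (Hnull b d) by (auto || (intros; apply Hzero; lra)).
unfold plus; simpl. ring.
Qed.

Lemma RInt_comp_plus (u : R -> R) a b d :
  (forall x, continuous u x) ->
  RInt (fun x => u (x + d)) a b = RInt u (a + d) (b + d).
Proof.
intros Hu.
rewrite <- (Rmult_1_l a), <- (Rmult_1_l b) at 2.
rewrite <- (RInt_comp_lin u 1 d a b) by solve_ex_RInt.
apply RInt_ext. intros x _. unfold scal; simpl; unfold mult; simpl. rewrite !Rmult_1_l. reflexivity.
Qed.

Lemma abs_derive_sub_diff_quotient_le (g : R -> R) x d M :
  0 < d -> (forall y, ex_derive g y) -> (forall y, ex_derive (Derive g) y) ->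
  (forall y, x <= y <= x + d -> Rabs (Derive (Derive g) y) <= M) ->
  Rabs (Derive g x - (g (x + d) - g x) / d) <= M * d.
Proof.
intros Hd Hg Hg' HM.
destruct (MVT_gen g x (x + d) (Derive g)) as [c [Hc Hmvt]].
- intros y _. apply Derive_correct, Hg.
- intros y _. apply continuity_pt_filterlim, continuous_of_ex_derive, Hg.
- rewrite Rmin_left, Rmax_right in Hc by lra.
  replace ((g (x + d) - g x) / d) with (Derive g c) by (rewrite Hmvt; field; lra).
  rewrite <- Rabs_Ropp, Ropp_minus_distr.
  eapply Rle_trans.
  + apply abs_sub_le_of_abs_derive_le; [exact Hg' |].
    intros y Hy. rewrite Rmin_left, Rmax_right in Hy by lra. apply HM. lra.
  + assert (0 <= M) by (eapply Rle_trans; [apply Rabs_pos | apply (HM x); lra]).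
    rewrite Rabs_pos_eq by lra. apply Rmult_le_compat_l; lra.
Qed.

Section IntegrationByParts.

Variables (H g : R -> R) (a b a' b' K : R).
Hypothesis H_continuous : forall x, continuous H x.
Hypothesis H_lipschitz : forall x y, a <= x <= b -> a <= y <= b ->
  Rabs (H x - H y) <= K * Rabs (x - y).
Hypothesis g_continuous : forall x, continuous g x.
Hypothesis g_support : forall x, x < a' \/ b' < x -> g x = 0.

Lemma RInt_mul_shift (d : R) :
  0 <= d -> a + d <= a' -> a + d <= b -> b' <= b ->
  RInt (fun x => H x * g (x + d)) a b = RInt (fun x => H (x - d) * g x) a b.
Proof.
intros Hd Ha Hab Hb.
set (u := fun x => H (x - d) * g x).
assert (Hu : forall x, continuous u x) by (intro; unfold u; solve_continuous).
rewrite (RInt_ext _ (fun x => u (x + d))) by (intros; unfold u; f_equal; f_equal; ring).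
rewrite RInt_comp_plus by exact Hu.
rewrite (RInt_eq_of_zero_outside u (a + d) b (a + d) (b + d)),
        (RInt_eq_of_zero_outside u (a + d) b a b); try lra; auto;
  intros x Hx; unfold u; rewrite g_support by lra; ring.
Qed.

(* Summation by parts moves the difference quotient from [g] onto the Lipschitz [H]. *)
Lemma abs_RInt_mul_diff_quotient_le (d : R) :
  0 < d -> a + d <= a' -> a + d <= b -> b' <= b ->
  Rabs (RInt (fun x => H x * ((g (x + d) - g x) / d)) a b)
    <= K * RInt (fun x => Rabs (g x)) a b.
Proof.
intros Hd Ha Hab Hb.
assert (Hsum : RInt (fun x => H x * ((g (x + d) - g x) / d)) a b
             = RInt (fun x => (H (x - d) - H x) / d * g x) a b).
{ rewrite (RInt_ext _ (fun x => / d * (H x * g (x + d) - H x * g x)))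
    by (intros; simpl; field; lra).
  rewrite (RInt_ext (fun x => (H (x - d) - H x) / d * g x)
                    (fun x => / d * (H (x - d) * g x - H x * g x)))
    by (intros; simpl; field; lra).
  rewrite !RInt_scal_minus by (intro; solve_continuous).
  rewrite RInt_mul_shift; auto; lra. }
rewrite Hsum.
eapply Rle_trans; [apply abs_RInt_le; [lra | solve_ex_RInt] |].
apply Rle_trans with (RInt (fun x => K * Rabs (g x)) a b).
2:{ right. apply (RInt_scal (fun x => Rabs (g x))). solve_ex_RInt. }
apply RInt_le; [lra | solve_ex_RInt | solve_ex_RInt |].
intros x Hx.
destruct (Req_dec (g x) 0) as [Hg0 | Hg0].
{ rewrite Hg0, !Rmult_0_r, Rabs_R0. lra. }
assert (a' <= x <= b') by (split; apply Rnot_lt_le; intro; apply Hg0, g_support; auto).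
rewrite Rabs_mult. apply Rmult_le_compat_r; [apply Rabs_pos |].
unfold Rdiv. rewrite Rabs_mult, Rabs_inv, (Rabs_pos_eq d) by lra.
apply Rmult_le_reg_r with d; [lra |]. rewrite Rmult_assoc, Rinv_l, Rmult_1_r by lra.
eapply Rle_trans; [apply H_lipschitz; lra |].
replace (x - d - x) with (- d) by ring. rewrite Rabs_Ropp, Rabs_pos_eq; lra.
Qed.

Lemma abs_RInt_mul_derive_le :
  a < b -> a < a' -> b' < b ->
  (forall x, ex_derive g x) -> (forall x, ex_derive (Derive g) x) ->
  (forall x, continuous (Derive (Derive g)) x) ->
  Rabs (RInt (fun x => H x * Derive g x) a b) <= K * RInt (fun x => Rabs (g x)) a b.
Proof.
intros Hab Ha Hb Hg Hg' Hg''.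
assert (Hdg : forall x, continuous (Derive g) x) by (intro; apply continuous_of_ex_derive, Hg').
destruct (bounded_on_of_continuous (Derive (Derive g)) a (b + 1)) as [M HM]; [lra | exact Hg'' |].
destruct (bounded_on_of_continuous H a b) as [S HS]; [lra | exact H_continuous |].
(* Replace [g'] by a difference quotient with step [d], at a cost linear in [d]. *)
apply (Rle_of_small_linear_error _ _ ((b - a) * (S * M)) (Rmin 1 (Rmin (a' - a) (b - a)))).
{ repeat apply Rmin_pos; lra. }
intros d [Hd0 Hd].
assert (d < 1 /\ d < a' - a /\ d < b - a) as (Hd1 & Hd2 & Hd3).
{ generalize (Rmin_l 1 (Rmin (a' - a) (b - a))) (Rmin_r 1 (Rmin (a' - a) (b - a)))
             (Rmin_l (a' - a) (b - a)) (Rmin_r (a' - a) (b - a)). lra. }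
set (q := fun x => (g (x + d) - g x) / d).
assert (Hq : forall x, continuous q x) by (intro; unfold q; solve_continuous).
rewrite (RInt_ext _ (fun x => H x * (Derive g x - q x) + H x * q x)) by (intros; simpl; ring).
rewrite (RInt_plus (fun x => H x * (Derive g x - q x)) (fun x => H x * q x)) by solve_ex_RInt.
assert (Herr : Rabs (RInt (fun x => H x * (Derive g x - q x)) a b) <= (b - a) * (S * (M * d))).
{ apply abs_RInt_le_const; [lra | solve_ex_RInt |].
  intros x Hx. rewrite Rabs_mult. apply Rmult_le_compat; try apply Rabs_pos; [apply HS, Hx |].
  apply abs_derive_sub_diff_quotient_le; auto.
  intros y Hy. apply HM. lra. }
assert (Hmain : Rabs (RInt (fun x => H x * q x) a b) <= K * RInt (fun x => Rabs (g x)) a b)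
  by (apply abs_RInt_mul_diff_quotient_le; lra).
eapply Rle_trans; [apply Rabs_triang |].
replace ((b - a) * (S * M) * d) with ((b - a) * (S * (M * d))) by ring.
simpl; lra.
Qed.

End IntegrationByParts.

Definition kappa_tilde_density (psi : R -> R) (r : R) : R :=
  2 * cosh r * psi r + sinh r * Derive psi r.

Lemma kappa_tilde_mul_cosh (phi psi : R -> R) t r :
  (forall x, ex_derive phi x) -> (forall x, ex_derive psi x) ->
  kappa_tilde phi psi t r * cosh r = kappa_tilde_density psi r.
Proof.
intros Hphi Hpsi.
set (c := cosh r); set (sh := sinh r).
set (p := phi r); set (p' := Derive phi r); set (q := psi r); set (q' := Derive psi r).
(* The coefficients do not depend on [t], so only [r]-derivatives survive in the Brioschi formula. *)
set (F := fun s => - (c * (s * p))).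
set (Fr := fun s => - (sh * (s * p) + c * (s * p'))).
set (G := fun s => (s * p) ^ 2 + exp (2 * (s * q))).
set (Gr := fun s => 2 * (s * p) * (s * p') + 2 * (s * q') * exp (2 * (s * q))).
set (kappa_s := fun s =>
  (det3 (- (2 * (sh * sh + c * c)) / 2 + 0 - 0 / 2) (0 / 2) (0 - 2 * c * sh / 2)
        (Fr s - 0 / 2) (c ^ 2) (F s)
        (Gr s / 2) (F s) (G s)
   - det3 0 (2 * c * sh / 2) (0 / 2)
          (2 * c * sh / 2) (c ^ 2) (F s)
          (0 / 2) (F s) (G s))
  / (c ^ 2 * G s - F s ^ 2) ^ 2).
assert (Hkappa : forall s, kappa (fun x => s * phi x) (fun x => s * psi x) t r = kappa_s s).
{ intro s. unfold kappa, gauss_curv, du, dv. cbv beta.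
  rewrite (Derive_ext (fun x => Derive (fun _ => (s * phi r) ^ 2 + exp (2 * (s * psi r))) x)
                      (fun _ => 0)) by (intro; apply Derive_const).
  rewrite !Derive_const.
  assert (HE : forall y, Derive (fun y => cosh y ^ 2) y = 2 * cosh y * sinh y).
  { intro y. apply is_derive_unique. auto_derive; auto; ring. }
  rewrite (Derive_ext _ _ _ HE), HE.
  replace (Derive (fun y => 2 * cosh y * sinh y) r) with (2 * (sh * sh + c * c))
    by (symmetry; apply is_derive_unique; auto_derive; auto; unfold c, sh; ring).
  replace (Derive (fun y => - (cosh y * (s * phi y))) r) with (Fr s).
  2:{ symmetry; apply is_derive_unique; auto_derive; auto.
      change (Derive (fun x => phi x) r) with p'. unfold Fr, sh, c, p. ring. }
  replace (Derive (fun y => (s * phi y) ^ 2 + exp (2 * (s * psi y))) r) with (Gr s).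
  2:{ symmetry; apply is_derive_unique; auto_derive; [repeat split; auto |].
      change (Derive (fun x => phi x) r) with p'; change (Derive (fun x => psi x) r) with q'.
      unfold Gr, p, q. ring. }
  reflexivity. }
assert (Hc : c <> 0) by (apply Rgt_not_eq, cosh_pos).
unfold kappa_tilde. rewrite (Derive_ext _ _ _ Hkappa).
rewrite (is_derive_unique kappa_s 0 ((2 * c * q + sh * q') / c)).
{ unfold kappa_tilde_density. fold c sh q q'. field. exact Hc. }
unfold kappa_s, F, G, Fr, Gr, det3. auto_derive.
all: replace (2 * (0 * q)) with 0 by ring; rewrite exp_0.
- match goal with |- ?X <> 0 => replace X with (c ^ 4) by ring end.
  apply pow_nonzero, Hc.
- field. exact Hc.
Qed.

Lemma Derive_eq_0_outside (g : R -> R) a' b' x :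
  (forall y, y < a' \/ b' < y -> g y = 0) -> x < a' \/ b' < x -> Derive g x = 0.
Proof.
intros Hg Hx.
rewrite (Derive_ext_loc g (fun _ => 0)); [apply Derive_const |].
destruct Hx as [Hx | Hx].
- apply (filter_imp (fun y => y < a')); [intros y Hy; apply Hg; lra | exact (open_lt a' x Hx)].
- apply (filter_imp (fun y => b' < y)); [intros y Hy; apply Hg; lra | exact (open_gt b' x Hx)].
Qed.

Section KappaTildeDensity.

Variables (psi : R -> R) (a' b' : R).
Hypothesis psi_derive : forall x, ex_derive psi x.
Hypothesis psi_derive2 : forall x, ex_derive (Derive psi) x.
Hypothesis psi_support : forall x, x < a' \/ b' < x -> psi x = 0.

Lemma continuous_kappa_tilde_density x : continuous (kappa_tilde_density psi) x.
Proof.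
assert (forall y, continuous (Derive psi) y) by (intro; apply continuous_of_ex_derive; auto).
unfold kappa_tilde_density. solve_continuous.
Qed.

Lemma kappa_tilde_density_eq_0_outside x :
  x < a' \/ b' < x -> kappa_tilde_density psi x = 0.
Proof.
intros Hx. unfold kappa_tilde_density.
rewrite (psi_support x Hx), (Derive_eq_0_outside psi a' b' x psi_support Hx). ring.
Qed.

(* [kappa_tilde_density psi - cosh * psi] is the derivative of [sinh * psi], which vanishes at
   both ends. *)
Lemma RInt_kappa_tilde_density a b :
  a < a' -> b' < b ->
  RInt (kappa_tilde_density psi) a b = RInt (fun r => cosh r * psi r) a b.
Proof.
intros Ha Hb.
set (dsinh_psi := fun x => cosh x * psi x + sinh x * Derive psi x).
assert (Hdpsi : forall x, continuous (Derive psi) x)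
  by (intro; apply continuous_of_ex_derive; auto).
assert (Hftc : RInt dsinh_psi a b = 0).
{ apply is_RInt_unique.
  replace 0 with (minus (sinh b * psi b) (sinh a * psi a)).
  - apply (is_RInt_derive (fun x => sinh x * psi x)).
    + intros x _. auto_derive; [auto |].
      change (Derive (fun y => psi y) x) with (Derive psi x). unfold dsinh_psi. ring.
    + intros x _. unfold dsinh_psi. solve_continuous.
  - rewrite (psi_support a), (psi_support b) by lra.
    unfold minus, plus, opp; simpl. ring. }
rewrite (RInt_ext _ (fun x => cosh x * psi x + dsinh_psi x))
  by (intros; unfold kappa_tilde_density, dsinh_psi; simpl; ring).
rewrite (RInt_plus (fun x => cosh x * psi x) dsinh_psi) by (unfold dsinh_psi; solve_ex_RInt).
rewrite Hftc. apply Rplus_0_r.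
Qed.

End KappaTildeDensity.

Section DensityEstimate.

Variables (h psi : R -> R) (rho a' b' C B : R).
Hypothesis C_nonneg : 0 <= C.
Hypothesis rho_pos : 0 < rho.
Hypothesis h_continuous : forall x, continuous h x.
Hypothesis h_lipschitz : forall x y, - rho <= x <= rho -> - rho <= y <= rho ->
  Rabs (h x - h y) <= C * Rabs (x - y).
Hypothesis psi_derive : forall x, ex_derive psi x.
Hypothesis psi_derive2 : forall x, ex_derive (Derive psi) x.
Hypothesis psi_derive2_continuous : forall x, continuous (Derive (Derive psi)) x.
Hypothesis psi_support_lb : - rho < a'.
Hypothesis psi_support_ub : b' < rho.
Hypothesis psi_support : forall x, x < a' \/ b' < x -> psi x = 0.
Hypothesis psi_L1 : RInt (fun r => Rabs (psi r)) (- rho) rho <= B.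

Let h_sub_le x : - rho <= x <= rho -> Rabs (h x - h 0) <= C * rho.
Proof.
intros Hx. eapply Rle_trans; [apply h_lipschitz; lra |].
apply Rmult_le_compat_l; [exact C_nonneg |]. rewrite Rminus_0_r. apply Rabs_le. lra.
Qed.

Let psi_continuous x : continuous psi x.
Proof. apply continuous_of_ex_derive, psi_derive. Qed.

Lemma abs_RInt_sub_mul_cosh_le :
  Rabs (RInt (fun r => (h r - h 0) * (2 * cosh r * psi r)) (- rho) rho)
    <= 2 * C * exp rho * rho * B.
Proof.
eapply Rle_trans; [apply abs_RInt_le; [lra | solve_ex_RInt] |].
apply Rle_trans with (RInt (fun r => 2 * C * exp rho * rho * Rabs (psi r)) (- rho) rho).
- apply RInt_le; [lra | solve_ex_RInt | solve_ex_RInt |].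
  intros x Hx.
  assert (Hcosh : cosh x <= exp rho) by (apply cosh_le_exp, Rabs_le; lra).
  assert (Hcosh0 := cosh_pos x).
  assert (Hh := h_sub_le x ltac:(lra)).
  rewrite !Rabs_mult, (Rabs_pos_eq 2), (Rabs_pos_eq (cosh x)) by lra.
  assert (Hpsi := Rabs_pos (psi x)). assert (Hh0 := Rabs_pos (h x - h 0)).
  assert (Rabs (h x - h 0) * cosh x * Rabs (psi x) <= C * rho * exp rho * Rabs (psi x)).
  { apply Rmult_le_compat_r; [exact Hpsi |]. apply Rmult_le_compat; lra. }
  nra.
- rewrite (RInt_scal (fun r => Rabs (psi r))) by solve_ex_RInt.
  apply Rmult_le_compat_l; [| exact psi_L1].
  assert (0 < exp rho) by apply exp_pos. apply Rmult_le_pos; [| lra]. nra.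
Qed.

Lemma sub_mul_sinh_lipschitz x y :
  - rho <= x <= rho -> - rho <= y <= rho ->
  Rabs ((h x - h 0) * sinh x - (h y - h 0) * sinh y) <= 2 * C * exp rho * rho * Rabs (x - y).
Proof.
intros Hx Hy.
assert (Hsinh : Rabs (sinh x - sinh y) <= exp rho * Rabs (x - y))
  by (apply sinh_lipschitz; apply Rabs_le; lra).
assert (Hsinh0 : Rabs (sinh x) <= exp rho * rho).
{ replace (sinh x) with (sinh x - sinh 0) by (rewrite sinh_0; ring).
  eapply Rle_trans; [apply (sinh_lipschitz x 0 rho); apply Rabs_le; lra |].
  apply Rmult_le_compat_l; [left; apply exp_pos |]. apply Rabs_le; lra. }
assert (Hhxy : Rabs (h x - h y) <= C * Rabs (x - y)) by (apply h_lipschitz; lra).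
assert (Hhy := h_sub_le y Hy).
replace ((h x - h 0) * sinh x - (h y - h 0) * sinh y)
  with ((h x - h y) * sinh x + (h y - h 0) * (sinh x - sinh y)) by ring.
eapply Rle_trans; [apply Rabs_triang |]. rewrite !Rabs_mult.
apply Rle_trans with (C * Rabs (x - y) * (exp rho * rho) + C * rho * (exp rho * Rabs (x - y))).
- apply Rplus_le_compat; apply Rmult_le_compat; auto using Rabs_pos.
- right; ring.
Qed.

Lemma abs_RInt_sub_mul_sinh_derive_le :
  Rabs (RInt (fun r => (h r - h 0) * sinh r * Derive psi r) (- rho) rho)
    <= 2 * C * exp rho * rho * B.
Proof.
eapply Rle_trans.
- apply (abs_RInt_mul_derive_le (fun r => (h r - h 0) * sinh r) psi (- rho) rho a' b');
    auto; try lra.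
  + intro x. solve_continuous.
  + apply sub_mul_sinh_lipschitz.
- apply Rmult_le_compat_l; [| exact psi_L1].
  assert (0 < exp rho) by apply exp_pos. apply Rmult_le_pos; [| lra]. nra.
Qed.

Lemma abs_RInt_mul_kappa_tilde_density_sub_le :
  RInt (fun r => cosh r * psi r) (- rho) rho = 1 ->
  Rabs (RInt (fun r => h r * kappa_tilde_density psi r) (- rho) rho - h 0)
    <= 4 * C * exp rho * rho * B.
Proof.
intros Hnorm.
assert (Hdens := continuous_kappa_tilde_density psi psi_derive psi_derive2).
assert (Hdpsi : forall x, continuous (Derive psi) x)
  by (intro; apply continuous_of_ex_derive, psi_derive2).
(* [h 0] is the average of [h] against the density, which has total mass one. *)
assert (Hmass : h 0 = RInt (fun r => h 0 * kappa_tilde_density psi r) (- rho) rho).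
{ rewrite (RInt_scal (kappa_tilde_density psi)) by solve_ex_RInt.
  rewrite (RInt_kappa_tilde_density psi a' b'); auto.
  rewrite Hnorm. symmetry. apply Rmult_1_r. }
rewrite Hmass, <- (RInt_minus (fun r => h r * kappa_tilde_density psi r)) by solve_ex_RInt.
rewrite (RInt_ext _ (fun r => (h r - h 0) * (2 * cosh r * psi r)
                              + (h r - h 0) * sinh r * Derive psi r))
  by (intros; unfold kappa_tilde_density; simpl; unfold minus, plus, opp; simpl; ring).
rewrite (RInt_plus (fun r => (h r - h 0) * (2 * cosh r * psi r))
                   (fun r => (h r - h 0) * sinh r * Derive psi r)) by solve_ex_RInt.
eapply Rle_trans; [apply Rabs_triang |].
generalize abs_RInt_sub_mul_cosh_le abs_RInt_sub_mul_sinh_derive_le. simpl. lra.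
Qed.

End DensityEstimate.

Lemma smooth_derive2 (g : R -> R) :
  smooth g ->
  (forall x, ex_derive g x) /\ (forall x, ex_derive (Derive g) x) /\
  (forall x, continuous (Derive (Derive g)) x).
Proof.
intros Hg. split; [| split].
- exact (Hg 0%nat).
- exact (Hg 1%nat).
- intro x. apply continuous_of_ex_derive, (Hg 2%nat).
Qed.

Definition clamp (rho x : R) : R := Rmax (- rho) (Rmin rho x).

Lemma clamp_between rho x : 0 <= rho -> - rho <= clamp rho x <= rho.
Proof. intros. unfold clamp, Rmax, Rmin. repeat destruct Rle_dec; lra. Qed.

Lemma clamp_id rho x : - rho <= x <= rho -> clamp rho x = x.
Proof. intros. unfold clamp, Rmax, Rmin. repeat destruct Rle_dec; lra. Qed.

Lemma clamp_lipschitz rho x y : Rabs (clamp rho x - clamp rho y) <= Rabs (x - y).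
Proof.
unfold clamp, Rmax, Rmin. repeat destruct Rle_dec; unfold Rabs; repeat destruct Rcase_abs; lra.
Qed.

Lemma is_lim_seq_RInt_of_uniform (u : nat -> R -> R) (v : R -> R) (eps : nat -> R) a b :
  a <= b -> (forall m, ex_RInt (u m) a b) -> ex_RInt v a b ->
  (forall m t, a <= t <= b -> Rabs (u m t - v t) <= eps m) -> is_lim_seq eps 0 ->
  is_lim_seq (fun m => RInt (u m) a b) (RInt v a b).
Proof.
intros Hab Hu Hv Huv Heps.
assert (Hlim : is_lim_seq (fun m => (b - a) * eps m) 0).
{ replace (Finite 0) with (Rbar_mult (b - a) 0) by (simpl; f_equal; ring).
  apply is_lim_seq_scal_l, Heps. }
apply (is_lim_seq_le_le (fun m => RInt v a b - (b - a) * eps m) _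
                        (fun m => RInt v a b + (b - a) * eps m)).
- intro m.
  assert (Hm : Rabs (RInt (fun t => u m t - v t) a b) <= (b - a) * eps m)
    by (apply abs_RInt_le_const; auto; apply (ex_RInt_minus (u m) v); auto).
  rewrite (RInt_minus (u m) v) in Hm by auto.
  apply Rabs_le_between in Hm. unfold minus, plus, opp in Hm; simpl in Hm. lra.
- assert (H := is_lim_seq_minus' _ _ _ _ (is_lim_seq_const (RInt v a b)) Hlim).
  rewrite Rminus_0_r in H. exact H.
- assert (H := is_lim_seq_plus' _ _ _ _ (is_lim_seq_const (RInt v a b)) Hlim).
  rewrite Rplus_0_r in H. exact H.
Qed.

Section Collar.

Variables (f : R -> R -> R) (Rc C rho : R) (psi : R -> R).
Hypothesis C_nonneg : 0 <= C.
Hypothesis f_lipschitz : forall t t' r r', - Rc < r < Rc -> - Rc < r' < Rc ->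
  Rabs (f t r - f t' r') <= C * (Rabs (t - t') + Rabs (r - r')).
Hypothesis rho_pos : 0 < rho.
Hypothesis rho_lt : rho < Rc.
Hypothesis psi_C0inf : C0inf (- rho) rho psi.

(* [f] is only controlled on the collar, so [r] is clamped to [[-rho, rho]], where the density
   lives. *)
Definition collar_average (t : R) : R :=
  RInt (fun r => f t (clamp rho r) * kappa_tilde_density psi r) (- rho) rho.

Lemma f_clamp_lipschitz t t' r r' :
  Rabs (f t (clamp rho r) - f t' (clamp rho r')) <= C * (Rabs (t - t') + Rabs (r - r')).
Proof.
assert (Hr := clamp_between rho r). assert (Hr' := clamp_between rho r').
eapply Rle_trans; [apply f_lipschitz; lra |].
apply Rmult_le_compat_l; [exact C_nonneg |].
generalize (clamp_lipschitz rho r r'). lra.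
Qed.

Lemma continuous_f_clamp t x : continuous (fun r => f t (clamp rho r)) x.
Proof.
apply (continuous_of_lipschitz _ C). intro y.
eapply Rle_trans; [apply f_clamp_lipschitz |].
rewrite Rminus_diag, Rabs_R0, Rplus_0_l. lra.
Qed.

Let psi_smooth : smooth psi := proj1 psi_C0inf.

Lemma RInt_kappa_tilde_collar (phi : R -> R) t :
  (forall x, ex_derive phi x) ->
  RInt (fun r => f t r * kappa_tilde phi psi t r * cosh r) (- Rc) Rc = collar_average t.
Proof.
intros Hphi.
destruct (proj2 psi_C0inf) as (a' & b' & Ha' & Hb' & Hsupp).
destruct (smooth_derive2 psi psi_smooth) as (Hd1 & Hd2 & _).
assert (Hdens := continuous_kappa_tilde_density psi Hd1 Hd2).
assert (Hfc := continuous_f_clamp t).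
(* Outside [[-rho, rho]] the density vanishes, so clamping [r] changes nothing. *)
rewrite (RInt_ext _ (fun r => f t (clamp rho r) * kappa_tilde_density psi r)).
- apply RInt_eq_of_zero_outside; try lra; [intro; solve_continuous |].
  intros x Hx. rewrite (kappa_tilde_density_eq_0_outside psi a' b') by (auto; lra). ring.
- intros x _. simpl. rewrite Rmult_assoc, kappa_tilde_mul_cosh by auto.
  destruct (Rlt_or_le x a') as [Hx | Hx]; [| destruct (Rlt_or_le b' x) as [Hx' | Hx']].
  + rewrite (kappa_tilde_density_eq_0_outside psi a' b') by auto. ring.
  + rewrite (kappa_tilde_density_eq_0_outside psi a' b') by auto. ring.
  + rewrite clamp_id by lra. reflexivity.
Qed.

Lemma continuous_collar_average t : continuous collar_average t.
Proof.
destruct (smooth_derive2 psi psi_smooth) as (Hd1 & Hd2 & _).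
assert (Hdens := continuous_kappa_tilde_density psi Hd1 Hd2).
assert (Hfc := continuous_f_clamp).
apply (continuous_of_lipschitz _
         (C * RInt (fun r => Rabs (kappa_tilde_density psi r)) (- rho) rho)).
intro t'.
assert (Hdiff : collar_average t' - collar_average t
  = RInt (fun r => (f t' (clamp rho r) - f t (clamp rho r)) * kappa_tilde_density psi r) (- rho) rho).
{ unfold collar_average.
  rewrite <- (RInt_minus (fun r => f t' (clamp rho r) * kappa_tilde_density psi r))
    by solve_ex_RInt.
  apply RInt_ext. intros. unfold minus, plus, opp; simpl. ring. }
rewrite Hdiff.
eapply Rle_trans; [apply abs_RInt_le; [lra | solve_ex_RInt] |].
apply Rle_trans with
  (RInt (fun r => C * Rabs (t' - t) * Rabs (kappa_tilde_density psi r)) (- rho) rho).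
- apply RInt_le; [lra | solve_ex_RInt | solve_ex_RInt |].
  intros r _. rewrite Rabs_mult. apply Rmult_le_compat_r; [apply Rabs_pos |].
  eapply Rle_trans; [apply f_clamp_lipschitz |].
  rewrite Rminus_diag, Rabs_R0, Rplus_0_r. lra.
- rewrite (RInt_scal (fun r => Rabs (kappa_tilde_density psi r))) by solve_ex_RInt.
  right. unfold scal; simpl; unfold mult; simpl. ring.
Qed.

Lemma abs_collar_average_sub_le B t :
  RInt (fun r => cosh r * psi r) (- rho) rho = 1 ->
  RInt (fun r => Rabs (psi r)) (- rho) rho <= B ->
  Rabs (collar_average t - f t 0) <= 4 * C * exp rho * rho * B.
Proof.
intros Hnorm HB.
destruct (proj2 psi_C0inf) as (a' & b' & Ha' & Hb' & Hsupp).
destruct (smooth_derive2 psi psi_smooth) as (Hd1 & Hd2 & Hd3).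
replace (f t 0) with (f t (clamp rho 0)) by (rewrite clamp_id by lra; reflexivity).
unfold collar_average.
apply (abs_RInt_mul_kappa_tilde_density_sub_le (fun r => f t (clamp rho r)) psi rho a' b' C B);
  auto; try lra.
- apply continuous_f_clamp.
- intros x y _ _. eapply Rle_trans; [apply f_clamp_lipschitz |].
  rewrite Rminus_diag, Rabs_R0, Rplus_0_l. lra.
Qed.

End Collar.

Theorem lemma3p6
  (L Rc : R) (HL : 0 < L) (HR : 0 < Rc)
  (Rm : nat -> R) (phi psi : nat -> R -> R)
  (HRm_pos : forall m, 0 < Rm m)
  (HRm_lt : forall m, Rm m < Rc)
  (HRm_dec : forall m, Rm (S m) <= Rm m)
  (HRm_lim : is_lim_seq Rm 0)
  (Hphi : forall m, C0inf (- Rm m) (Rm m) (phi m))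
  (Hpsi : forall m, C0inf (- Rm m) (Rm m) (psi m))
  (Hnorm : forall m, RInt (fun s => cosh s * psi m s) (- Rm m) (Rm m) = 1)
  (HL1 : exists B, forall m, RInt (fun s => Rabs (psi m s)) (- Rm m) (Rm m) <= B)
  (f : R -> R -> R)
  (Hper : forall t r, f (t + L) r = f t r)
  (Hlip : exists C, forall t t' r r', - Rc < r < Rc -> - Rc < r' < Rc ->
            Rabs (f t r - f t' r') <= C * (Rabs (t - t') + Rabs (r - r'))) :
  is_lim_seq
    (fun m => RInt (fun t => RInt (fun r =>
                 f t r * kappa_tilde (phi m) (psi m) t r * cosh r) (- Rc) Rc) 0 L)
    (RInt (fun t => f t 0) 0 L).
Proof.
destruct Hlip as [C HC], HL1 as [B HB].
assert (HC0 : 0 <= C).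
{ generalize (HC 1 0 0 0 ltac:(lra) ltac:(lra)) (Rabs_pos (f 1 0 - f 0 0)).
  rewrite Rminus_0_r, Rminus_diag, Rabs_R1, Rabs_R0. lra. }
assert (HB0 : 0 <= B).
{ destruct (smooth_derive2 _ (proj1 (Hpsi 0%nat))) as [Hd _].
  eapply Rle_trans; [| apply (HB 0%nat)].
  apply RInt_ge_0; [generalize (HRm_pos 0%nat); lra | solve_ex_RInt | intros; apply Rabs_pos]. }
apply (is_lim_seq_ext (fun m => RInt (collar_average f (Rm m) (psi m)) 0 L)).
{ intro m. apply RInt_ext. intros t _. symmetry.
  apply (RInt_kappa_tilde_collar f Rc C); auto.
  exact (proj1 (smooth_derive2 _ (proj1 (Hphi m)))). }
apply (is_lim_seq_RInt_of_uniform _ _ (fun m => 4 * C * exp Rc * B * Rm m)); try lra.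
- intro m. apply (ex_RInt_continuous (V := R_CompleteNormedModule)). intros t _.
  apply (continuous_collar_average f Rc C); auto.
- apply (ex_RInt_continuous (V := R_CompleteNormedModule)). intros x _.
  apply (continuous_of_lipschitz _ C). intro y.
  eapply Rle_trans; [apply HC; lra |]. rewrite Rminus_diag, Rabs_R0, Rplus_0_r. lra.
- intros m t _. eapply Rle_trans; [apply (abs_collar_average_sub_le f Rc C); auto |].
  assert (exp (Rm m) <= exp Rc) by (apply exp_le_exp_of_le; left; auto).
  assert (0 <= C * B * Rm m) by (generalize (HRm_pos m); intro; apply Rmult_le_pos; nra).
  nra.
- replace (Finite 0) with (Rbar_mult (4 * C * exp Rc * B) 0) by (simpl; f_equal; ring).
  apply (is_lim_seq_scal_l Rm), HRm_lim.
Qed.
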